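(* Let $K\ge1$, let $q_1,\dots,q_K$ be distinct primes, $p=q_1\cdots q_K$, $Q=\sum_{j=1}^K 1/q_j$, and let $d\ge0$ be an integer. For each $j$ let $\Lambda_j=q_j\mathbb Z$ and $$\Lambda_j^-=\{n\in\Lambda_j:\ \exists\, j'\ne j,\ \exists\, n'\in\Lambda_{j'}\text{ with }|n-n'|\le d\},\qquad \Lambda=\bigcup_{j=1}^K(\Lambda_j\setminus\Lambda_j^-).$$ Then for every integer $n_0$, $$pQ\Big(1-\frac{2K(d+1)}{\min_{j}q_j}\Big)<\#\big(\Lambda\cap[n_0,n_0+p)\big)\le pQ.$$ *)

From mathcomp Require Import all_boot all_order all_algebra.
From mathcomp Require Import boolp.
Set Implicit Arguments. Unset Strict Implicit. Unset Printing Implicit Defensive.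
Import Order.TTheory GRing.Theory Num.Theory.
Local Open Scope ring_scope.

Definition inLam (K : nat) (q : 'I_K -> nat) (j : 'I_K) (n : int) : Prop :=
  (((q j)%:Z %| n)%Z : Prop).

Definition inLamMinus (K : nat) (q : 'I_K -> nat) (d : nat) (j : 'I_K) (n : int) : Prop :=
  inLam q j n /\
  exists j' : 'I_K, j' <> j /\ exists n' : int, inLam q j' n' /\ `|n - n'| <= d%:Z.

Definition inLambda (K : nat) (q : 'I_K -> nat) (d : nat) (n : int) : Prop :=
  exists j : 'I_K, inLam q j n /\ ~ inLamMinus q d j n.

Definition countLambda (K : nat) (q : 'I_K -> nat) (d : nat) (n0 : int) (p : nat) : nat :=
  \sum_(k < p) (`[< inLambda q d (n0 + (k : nat)%:Z) >] : nat).

From mathcomp Require Import all_boot all_order all_algebra.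
From mathcomp Require Import boolp.
From mathcomp Require Import zify ring.
Set Implicit Arguments. Unset Strict Implicit. Unset Printing Implicit Defensive.
Import Order.TTheory GRing.Theory Num.Theory.
Local Open Scope ring_scope.

(* A window of length p = q_1 ... q_K contains exactly p / q_j multiples of q_j,
   so Λ, being contained in the union of the Λ_j, has at most Σ_j p / q_j = pQ
   points there.  Conversely a multiple n of q_j is lost only if n + t is a
   multiple of some q_j' (j' ≠ j) for some |t| ≤ d; by the Chinese remainder
   theorem each of these (2d+1)(K-1) conditions has at most p / (q_j q_j')
   ≤ p / (q_j min q) solutions in the window, so at most a fraction
   (2d+1)(K-1) / min q < 2K(d+1) / min q of the multiples is lost. *)

Definition count_window (P : int -> bool) (n0 : int) (L : nat) : nat :=
  (\sum_(k < L) P (n0 + k%:Z)%R)%N.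

Lemma count_windowD (P : int -> bool) (n0 : int) (a b : nat) :
  count_window P n0 (a + b) = (count_window P n0 a + count_window P (n0 + a%:Z) b)%N.
Proof.
rewrite /count_window big_split_ord /=; congr (_ + _)%N.
by apply: eq_bigr => k _; rewrite /= PoszD addrA.
Qed.

Lemma count_window_le1 (P : int -> bool) (n0 : int) (M : nat) :
  (forall x y, P x -> P y -> (M%:Z %| x - y)%Z) -> (count_window P n0 M <= 1)%N.
Proof.
move=> congrP; rewrite /count_window -big_mkcond /= sum1_card.
apply/card_le1_eqP => i j /congrP Pi /Pi.
have -> : n0 + (i : nat)%:Z - (n0 + (j : nat)%:Z) = (i : nat)%:Z - (j : nat)%:Z by ring.
rewrite -eqz_mod_dvd !modz_nat !modn_small //.
by move=> /eqP [] /val_inj.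
Qed.

Lemma count_window_periodic_le (P : int -> bool) (n0 : int) (M r : nat) :
  (forall x y, P x -> P y -> (M%:Z %| x - y)%Z) -> (count_window P n0 (M * r) <= r)%N.
Proof.
move=> congrP; elim: r n0 => [|r IHr] n0; first by rewrite muln0 /count_window big_ord0.
by rewrite mulnS count_windowD -add1n leq_add // count_window_le1.
Qed.

Lemma count_window_dvdz_ge1 (q : nat) (n0 : int) :
  (0 < q)%N -> (1 <= count_window (fun x => q%:Z %| x)%Z n0 q)%N.
Proof.
move=> q_gt0; have r_ge0 : (0 <= (- n0) %% q%:Z)%Z by rewrite modz_ge0 //; lia.
have r_lt : (`|((- n0) %% q%:Z)%Z| < q)%N.
  by rewrite -ltz_nat gez0_abs // ltz_pmod.
rewrite /count_window (bigD1 (Ordinal r_lt)) //= gez0_abs //.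
suff -> : (q%:Z %| n0 + ((- n0) %% q%:Z)%Z)%Z by [].
by apply/dvdz_mod0P; rewrite modzDmr subrr mod0z.
Qed.

Lemma count_window_dvdz (q r : nat) (n0 : int) :
  (0 < q)%N -> count_window (fun x => q%:Z %| x)%Z n0 (q * r) = r.
Proof.
move=> q_gt0; apply/eqP; rewrite eqn_leq; apply/andP; split.
  by apply: count_window_periodic_le => x y qx qy; rewrite rpredB.
elim: r n0 => [|r IHr] n0 //.
by rewrite mulnS count_windowD -add1n leq_add ?count_window_dvdz_ge1.
Qed.

Lemma count_window_coprime_le (q1 q2 r : nat) (c n0 : int) : coprime q1 q2 ->
  (count_window (fun x => (q1%:Z %| x)%Z && (q2%:Z %| (x + c)%R)%Z) n0 (q1 * q2 * r) <= r)%N.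
Proof.
move=> cop; apply: count_window_periodic_le => x y /andP[q1x q2x] /andP[q1y q2y].
rewrite PoszM Gauss_dvdz // rpredB //=.
have -> : x - y = (x + c) - (y + c) by ring.
by rewrite rpredB.
Qed.

Lemma ltr_lower_bound_of_loss (R : realFieldType) (S c L m K d : nat) :
  (0 < m)%N -> (0 < S)%N -> (1 <= K)%N ->
  (S <= c + L)%N -> (m * L <= (2 * d + 1) * (K - 1) * S)%N ->
  S%:R * (1 - (2 * K * (d + 1))%:R / m%:R) < c%:R :> R.
Proof.
move=> m_gt0 S_gt0 K_ge1 S_le mL_le.
have key : (m * S < m * c + 2 * K * (d + 1) * S)%N.
  by have := leq_mul (leqnn m) S_le; nia.
rewrite mulrBr mulr1 ltrBlDr -(ltr_pM2r (_ : 0 < m%:R)) ?ltr0n //.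
rewrite mulrDl mulrA mulfVK ?pnatr_eq0 -?lt0n // -!natrM -natrD ltr_nat.
nia.
Qed.

(* [t] ranges over ['I_(2d+1)] and encodes the shift [t - d] in [[-d, d]]. *)
Definition collides (qj qj' d t : nat) (x : int) : bool :=
  (qj%:Z %| x)%Z && (qj'%:Z %| (x + (t%:Z - d%:Z))%R)%Z.

Section Counting.

Variables (K : nat) (q : 'I_K -> nat) (d : nat) (n0 : int).
Hypothesis q_prime : forall j, prime (q j).
Hypothesis q_inj : injective q.

Local Notation p := (\prod_(j < K) q j)%N.
Local Notation S := (\sum_(j < K) p %/ q j)%N.
Local Notation collisions :=
  (\sum_(j < K) \sum_(j' | j' != j) \sum_(t < (2 * d + 1)%N)
     count_window (collides (q j) (q j') d t) n0 p)%N.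

Lemma inLambda_le_sum_dvdz (x : int) :
  (`[< inLambda q d x >] <= \sum_j ((q j)%:Z %| x)%Z)%N.
Proof.
case: (asboolP (inLambda q d x)) => //= -[j [qjx _]].
by rewrite (bigD1 j) //= qjx add1n.
Qed.

Lemma sum_dvdz_le_inLambda_collides (x : int) :
  (\sum_j ((q j)%:Z %| x)%Z <= `[< inLambda q d x >] +
     \sum_j \sum_(j' | j' != j) \sum_(t < (2 * d + 1)%N) collides (q j) (q j') d t x)%N.
Proof.
(* Either some j has x in Λ_j \ Λ_j^-: then x ∈ Λ and q_j is its only divisor among
   the q's, since another one would put x into Λ_j^- with n' = x.  Or every q_j
   dividing x witnesses x ∈ Λ_j^-, i.e. a collision (j, j', n' - x). *)
case: (pickP (fun j => ((q j)%:Z %| x)%Z && ~~ `[< inLamMinus q d j x >])) =>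
    [j0 /andP[qj0x /asboolPn notMinus] | allMinus].
  have -> : `[< inLambda q d x >] = true by apply/asboolP; exists j0.
  rewrite (bigD1 j0) //= qj0x big1 ?addn0 // => j /eqP neq.
  case qjx : ((q j)%:Z %| x)%Z => //; exfalso; apply: notMinus; split => //.
  by exists j; split => //; exists x; rewrite subrr normr0.
rewrite addnC (leq_trans _ (leq_addr _ _)) //; apply: leq_sum => j _.
case qjx : ((q j)%:Z %| x)%Z => //=.
have /asboolP [_ [j' [neq [n' [qj'n' near]]]]] : `[< inLamMinus q d j x >].
  by have := allMinus j; rewrite /= qjx => /negbFE.
have [lo hi] : - (d%:Z) <= x - n' /\ x - n' <= d%:Z by apply/andP; rewrite -ler_norml.
have t_eq : (`|(n' - x + d%:Z)%R|%N)%:Z = n' - x + d%:Z by rewrite gez0_abs //; lia.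
have t_lt : (`|(n' - x + d%:Z)%R|%N < 2 * d + 1)%N by rewrite -ltz_nat t_eq; lia.
have neqb : j' != j by apply/eqP.
rewrite (bigD1 j') //= (bigD1 (Ordinal t_lt)) //= /collides qjx t_eq /=.
have -> : x + (n' - x + d%:Z - d%:Z) = n' by ring.
by rewrite qj'n'.
Qed.

Lemma q_gt0 j : (0 < q j)%N.
Proof. exact: prime_gt0. Qed.

Lemma dvdn_q_prod j : (q j %| p)%N.
Proof. by rewrite (bigD1 j) //= dvdn_mulr. Qed.

Lemma coprime_q j j' : j' != j -> coprime (q j) (q j').
Proof.
move=> neq; rewrite prime_coprime // dvdn_prime2 //.
by apply: contra neq => /eqP /q_inj ->.
Qed.

Lemma dvdn_qq_prod j j' : j' != j -> (q j * q j' %| p)%N.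
Proof. by move=> neq; rewrite Gauss_dvd ?coprime_q ?dvdn_q_prod. Qed.

Lemma count_window_q_prod j :
  count_window (fun x => (q j)%:Z %| x)%Z n0 p = (p %/ q j)%N.
Proof. by rewrite -{1}(divnK (dvdn_q_prod j)) mulnC count_window_dvdz ?q_gt0. Qed.

Lemma prod_mul_sum_inv :
  p%:R * (\sum_j ((q j)%:R)^-1) = S%:R :> rat.
Proof.
rewrite mulr_sumr natr_sum; apply: eq_bigr => j _.
by rewrite -{1}(divnK (dvdn_q_prod j)) natrM mulfK // pnatr_eq0 -lt0n q_gt0.
Qed.

Lemma countLambda_le_sum : (countLambda q d n0 p <= S)%N.
Proof.
under [X in (_ <= X)%N]eq_bigr => j _ do rewrite -count_window_q_prod.
rewrite /countLambda /count_window exchange_big /=.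
by apply: leq_sum => k _; apply: inLambda_le_sum_dvdz.
Qed.

Lemma sum_le_countLambda_collisions : (S <= countLambda q d n0 p + collisions)%N.
Proof.
under [X in (X <= _)%N]eq_bigr => j _ do rewrite -count_window_q_prod.
rewrite /countLambda /count_window exchange_big /=.
under [X in (_ + X)%N]eq_bigr => j _.
  under eq_bigr => j' _ do rewrite exchange_big.
  rewrite exchange_big; over.
rewrite /= [X in (_ + X)%N]exchange_big -big_split /=.
by apply: leq_sum => k _; apply: sum_dvdz_le_inLambda_collides.
Qed.

Lemma count_window_collides_le j j' t : j' != j ->
  (count_window (collides (q j) (q j') d t) n0 p <= p %/ (q j * q j'))%N.
Proof.
move=> neq; rewrite -{1}(divnK (dvdn_qq_prod neq)) mulnC.
exact: count_window_coprime_le (coprime_q neq).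
Qed.

Lemma collisions_le (m : nat) : (forall j, m <= q j)%N ->
  (m * collisions <= (2 * d + 1) * (K - 1) * S)%N.
Proof.
move=> m_le; rewrite !big_distrr /=; apply: leq_sum => j _.
have per_pair j' : j' != j ->
    (m * \sum_(t < 2 * d + 1) count_window (collides (q j) (q j') d t) n0 p
       <= (2 * d + 1) * (p %/ q j))%N.
  move=> neq; rewrite big_distrr /=.
  apply: (@leq_trans (\sum_(t < 2 * d + 1) p %/ q j)); last first.
    by rewrite big_const_ord iter_addn_0 mulnC.
  apply: leq_sum => t _.
  rewrite (leq_trans (leq_mul (m_le j') (leqnn _))) // mulnC -leq_divRL ?q_gt0 //.
  by rewrite -divnMA count_window_collides_le.
rewrite big_distrr /=.
apply: (@leq_trans (\sum_(j' | j' != j) (2 * d + 1) * (p %/ q j))%N); first exact: leq_sum.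
rewrite sum_nat_const (eq_card (B := predC1 j)) => [|j']; last by rewrite !inE.
by rewrite cardC1 card_ord subn1 mulnCA mulnA.
Qed.

End Counting.

Theorem mainTheorem4 (K : nat) (q : 'I_K -> nat) (d : nat) (m : nat) (n0 : int)
  (hK : (1 <= K)%N)
  (hprime : forall j, prime (q j))
  (hinj : injective q)
  (hm1 : exists j, q j = m)
  (hm2 : forall j, (m <= q j)%N) :
  let p : nat := (\prod_(j < K) q j)%N in
  let Q : rat := \sum_(j < K) ((q j)%:R)^-1 in
  (p%:R * Q * (1 - (2 * K * (d + 1))%:R / m%:R) < (countLambda q d n0 p)%:R :> rat)
  /\ ((countLambda q d n0 p)%:R <= p%:R * Q :> rat).
Proof.
move=> p Q; have [j0 qj0] := hm1.
have m_gt0 : (0 < m)%N by rewrite -qj0 q_gt0.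
have S_gt0 : (0 < \sum_(j < K) p %/ q j)%N.
  by rewrite (bigD1 j0) //= ltn_addr // divn_gt0 ?q_gt0 // dvdn_leq ?dvdn_q_prod
    ?prodn_gt0 // => j; apply: q_gt0.
rewrite /p /Q prod_mul_sum_inv //; split; last by rewrite ler_nat countLambda_le_sum.
apply: ltr_lower_bound_of_loss => //.
  exact: sum_le_countLambda_collisions.
exact: collisions_le.
Qed.
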